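(* Let $\sigma$ be a regular expression having the HOMOGENEITY property with constant $D_\sigma$, let $C_\sigma$ be the integer such that for every $n\ge1$ the maximum number of $\sigma$-patterns among time series of length $n$ equals $\max(0,\lfloor (n-C_\sigma)/D_\sigma\rfloor)$, and let $\gamma(X,R)$ be the constraint $\mathrm{nb}\_\sigma(X,R)$. Then the gap-to-loss condition is satisfied for $\gamma$, and for every ground time series $X$ of length $n$, $$\mathrm{Loss}_\gamma(X)=\mathrm{Gap}_\gamma(X)\cdot D_\sigma+(1-\mathrm{sgn}(R))\cdot(\min(n,C_\sigma)-1)+\max(0,n-C_\sigma)\bmod D_\sigma.$$
   Context: Signature of $X=\langle X_1,\dots,X_n\rangle$: the word $\langle S_1,\dots,S_{n-1}\rangle$ over $\Sigma=\{<,=,>\}$ with $S_i$ given by comparing $X_i$ and $X_{i+1}$. For $\sigma$ with integer constants $b_\sigma,a_\sigma$, whenever $\langle S_i,\dots,S_j\rangle$ is a maximal word matching $\sigma$, $\langle X_{i+b_\sigma},\dots,X_{j+1-a_\sigma}\rangle$ is a $\sigma$-pattern; $\mathrm{nb}\_\sigma(X,R)$ holds iff $R$ is the number of $\sigma$-patterns of $X$. Ground time series: fixed non-empty integer sequence. $\mathrm{Gap}_\gamma(X)$: maximum value of $R$ over time series of length $n$ minus the value of $R$ for $X$. $\mathrm{Loss}_\gamma(X)$: $n$ minus the length of a shortest time series with the same value of $R$. $\mathrm{sgn}$: signum. Gap-to-loss condition: there is a function $h$ with $\mathrm{Loss}_\gamma(X)=h(\mathrm{Gap}_\gamma(X),\mathrm{sgn}(R),n)$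 for all ground $X$ of length $n$. Seed transducer for $\sigma$: a deterministic finite transducer whose transitions are labelled by an input symbol in $\Sigma$ and an output symbol in $\{\mathtt{found},\mathtt{not\_found}\}$, such that on the signature of any time series the $\mathtt{found}$ outputs correspond bijectively to the $\sigma$-patterns (each $\mathtt{found}$ marks the discovery of a new maximal occurrence of $\sigma$). A $\mathtt{found}$-transition is one with output $\mathtt{found}$; a $\mathtt{found}$-path is a sequence of consecutive transitions containing at least one $\mathtt{found}$-transition, its length being its number of transitions. HOMOGENEITY property: (1) a seed transducer $T_\sigma$ for $\sigma$ exists (the paper phrases this as $\langle\sigma,b_\sigma\rangle$ being a recognisable pattern); (2) for every state of $T_\sigma$ that is the destination of a $\mathtt{found}$-transition, the length of the shortest $\mathtt{found}$-path starting from it is the same constant, denoted $D_\sigma$. *)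

From mathcomp Require Import all_boot all_order all_algebra.
Set Implicit Arguments. Unset Strict Implicit. Unset Printing Implicit Defensive.
Import Order.TTheory GRing.Theory Num.Theory.

Inductive cmp := CLt | CEq | CGt.

Definition cmpz (x y : int) : cmp :=
  if (x < y)%R then CLt else if x == y then CEq else CGt.

Fixpoint signature (X : seq int) : seq cmp :=
  match X with
  | x :: ((y :: _) as t) => cmpz x y :: signature t
  | _ => [::]
  end.

Inductive regex :=
  | RVoid
  | REps
  | RSym of cmp
  | RAlt of regex & regex
  | RCat of regex & regex
  | RStar of regex.

Inductive matches : regex -> seq cmp -> Prop :=
  | m_eps : matches REps [::]
  | m_sym a : matches (RSym a) [:: a]
  | m_altl r1 r2 w : matches r1 w -> matches (RAlt r1 r2) w
  | m_altr r1 r2 w : matches r2 w -> matches (RAlt r1 r2) w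
  | m_cat r1 r2 w1 w2 : matches r1 w1 -> matches r2 w2 -> matches (RCat r1 r2) (w1 ++ w2)
  | m_star0 r : matches (RStar r) [::]
  | m_starS r w1 w2 : matches r w1 -> matches (RStar r) w2 -> matches (RStar r) (w1 ++ w2).

(* The factor <S_i, ..., S_j> of s (0-based, i <= j < size s). *)
Definition factor (s : seq cmp) (i j : nat) : seq cmp := take (j - i).+1 (drop i s).

Definition occurrence (sigma : regex) (s : seq cmp) (p : nat * nat) : Prop :=
  p.1 <= p.2 < size s /\ matches sigma (factor s p.1 p.2).

Definition maximal_occurrence (sigma : regex) (s : seq cmp) (p : nat * nat) : Prop :=
  occurrence sigma s p /\
  forall q : nat * nat, occurrence sigma s q -> q.1 <= p.1 -> p.2 <= q.2 -> q = p.

(* nb_sigma(X, R): R is the number of sigma-patterns of X, i.e. the number of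
   maximal occurrences of sigma in the signature of X (each maximal occurrence
   <S_i..S_j> yields exactly one sigma-pattern <X_{i+b},...,X_{j+1-a}>). *)
Definition nb_sigma (sigma : regex) (X : seq int) (R : nat) : Prop :=
  exists ps : seq (nat * nat),
    [/\ uniq ps,
        (forall p, p \in ps <-> maximal_occurrence sigma (signature X) p)
      & size ps = R].

Definition is_max_nb (sigma : regex) (n : nat) (M : int) : Prop :=
  (exists X : seq int, exists R : nat, [/\ size X = n, nb_sigma sigma X R & Posz R = M]) /\
  (forall (X : seq int) (R : nat), size X = n -> nb_sigma sigma X R -> (Posz R <= M)%R).

Definition is_min_len (sigma : regex) (R0 : nat) (l : nat) : Prop :=
  (exists Y : seq int, [/\ size Y = l, 0 < l & nb_sigma sigma Y R0]) /\
  (forall Y : seq int, 0 < size Y -> nb_sigma sigma Y R0 -> l <= size Y).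

(* Deterministic finite transducers over Sigma with outputs found/not_found
   (true = found).  The transition function is total. *)
Record transducer := Transducer {
  tstate : finType;
  tinit : tstate;
  tdelta : tstate -> cmp -> tstate * bool
}.

Fixpoint nfound (T : transducer) (q : tstate T) (w : seq cmp) : nat :=
  match w with
  | [::] => 0
  | a :: w' => let: (q', b) := tdelta q a in b + nfound q' w'
  end.

(* seed transducer for sigma: on the signature of every time series, the found
   outputs are in bijection with the sigma-patterns (same number). *)
Definition seed_transducer (sigma : regex) (T : transducer) : Prop :=
  forall X : seq int, 0 < size X -> nb_sigma sigma X (nfound (tinit T) (signature X)).

Definition found_destination (T : transducer) (q : tstate T) : Prop :=
  exists (p : tstate T) (a : cmp), tdelta p a = (q, true).

(* A path of consecutive transitions from q is determined by its input word w
   (determinism); it is a found-path iff it outputs at least one found.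
   shortest found-path from q has length D: *)
Definition shortest_found_path (T : transducer) (q : tstate T) (D : nat) : Prop :=
  (exists w : seq cmp, size w = D /\ 0 < nfound q w) /\
  (forall w : seq cmp, 0 < nfound q w -> D <= size w).

Definition homogeneous (sigma : regex) (D : nat) : Prop :=
  exists T : transducer, seed_transducer sigma T /\
    forall q : tstate T, found_destination q -> shortest_found_path q D.

(* For D > 0 the maximum formula says that a series of length l can carry
   R > 0 patterns only if R * D <= l - C, and that length C + R * D does
   carry R patterns; so the shortest series with R > 0 patterns has length
   C + R * D, while with no pattern it is a single point.  The loss is then
   n - C - R * D, resp. n - 1, and the formula is the Euclidean division of
   max(0, n - C) by D, whose quotient is the maximum M. *)

From mathcomp Require Import all_boot all_order all_algebra.
From mathcomp Require Import zify.

Set Implicit Arguments.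
Unset Strict Implicit.
Unset Printing Implicit Defensive.

Import Order.TTheory GRing.Theory Num.Theory.
Local Open Scope ring_scope.

Lemma max0_divz_mulz_addz_modz (a : int) (d : nat) :
  Num.max 0 (a %/ d%:Z)%Z * d%:Z + (Num.max 0 a %% d%:Z)%Z = Num.max 0 a.
Proof.
have [->|d_gt0] := posnP d; first by rewrite divz0 modz0; lia.
have dz_gt0 : 0 < d%:Z by rewrite ltz_nat.
have [a_ge0|a_lt0] := lerP 0 a.
  rewrite !max_r ?divz_ge0 //.
  exact/esym/divz_eq.
have : (a %/ d%:Z < 0)%Z by rewrite ltz_divLR // mul0r.
by rewrite !max_l ?mod0z ?mul0r ?addr0 //; lia.
Qed.

Lemma nb_sigma_singleton (sigma : regex) (x : int) (R : nat) :
  nb_sigma sigma [:: x] R <-> R = 0%N.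
Proof.
split=> [[[|p ps] [_ mem_ps <-]] // | ->].
  by have [[/andP[_]]] := (mem_ps p).1 (mem_head _ _).
by exists [::]; split=> // p; split=> // [[[/andP[_]]]].
Qed.

Lemma is_max_nb_uniq (sigma : regex) (n : nat) (M M' : int) :
  is_max_nb sigma n M -> is_max_nb sigma n M' -> M = M'.
Proof.
move=> [[X [R [sizeX XR <-]]] maxM] [[X' [R' [sizeX' XR' <-]]] maxM'].
by apply/le_anti; rewrite (maxM' X R) // (maxM X' R').
Qed.

Lemma is_max_nb_one (sigma : regex) : is_max_nb sigma 1 0.
Proof.
split; first by exists [:: 0], 0%N; split=> //; apply/nb_sigma_singleton.
by move=> [|x [|? ?]] // R _ /nb_sigma_singleton ->.
Qed.

Lemma is_min_len0 (sigma : regex) (l : nat) :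
  is_min_len sigma 0 l -> l = 1%N.
Proof.
move=> [[Y [<- Y_gt0 _]] minl].
have := minl [:: 0] erefl; rewrite nb_sigma_singleton => /(_ erefl) /=.
by move: Y_gt0; lia.
Qed.

Section MaximumFormula.

Variables (sigma : regex) (D : nat) (C : int).

Hypothesis max_nb : forall n : nat, (0 < n)%N ->
  is_max_nb sigma n (Num.max 0 ((n%:Z - C) %/ D%:Z)%Z).

Lemma nb_sigma_le_max (X : seq int) (R : nat) :
  (0 < size X)%N -> nb_sigma sigma X R ->
  R%:Z <= Num.max 0 (((size X)%:Z - C) %/ D%:Z)%Z.
Proof. by move=> X_gt0 XR; have [_ /(_ X R erefl XR)] := max_nb X_gt0. Qed.

Lemma nb_sigma_mulD_le (X : seq int) (R : nat) :
  (0 < size X)%N -> nb_sigma sigma X R ->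
  R%:Z * D%:Z <= Num.max 0 ((size X)%:Z - C).
Proof.
move=> X_gt0 /(nb_sigma_le_max X_gt0) le_RM.
rewrite -(max0_divz_mulz_addz_modz _ D).
have : (0 <= Num.max 0 ((size X)%:Z - C) %% D%:Z)%Z.
  by case: (posnP D) => [->|D_gt0]; rewrite ?modz0 ?modz_ge0 //; lia.
by move: le_RM; nia.
Qed.

Lemma nb_sigma_gt0_D_gt0 (X : seq int) (R : nat) :
  (0 < size X)%N -> nb_sigma sigma X R -> (0 < R)%N -> (0 < D)%N.
Proof.
move=> X_gt0 /(nb_sigma_le_max X_gt0) + R_gt0.
by case: (posnP D) => [->|//]; rewrite divz0; lia.
Qed.

Lemma one_subC_lt_D : (0 < D)%N -> 1 - C < D%:Z.
Proof.
move=> D_gt0.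
have max1_eq0 := is_max_nb_uniq (max_nb (ltn0Sn 0)) (is_max_nb_one sigma).
rewrite -(mul1r D%:Z) -ltz_divLR ?ltz_nat //; lia.
Qed.

Lemma is_min_len_gt0 (R l : nat) :
  (0 < R)%N -> is_min_len sigma R l -> l%:Z = C + R%:Z * D%:Z.
Proof.
move=> R_gt0 [[Y [sizeY ? YR]] minl].
have Y_gt0 : (0 < size Y)%N by rewrite sizeY.
have D_gt0 := nb_sigma_gt0_D_gt0 Y_gt0 YR R_gt0.
have := nb_sigma_mulD_le Y_gt0 YR; rewrite sizeY => RD_le.
have RD_gt0 : 0 < R%:Z * D%:Z by rewrite mulr_gt0 ?ltz_nat.
have [n0 n0E] : exists n0 : nat, n0%:Z = C + R%:Z * D%:Z.
  by exists (absz (C + R%:Z * D%:Z)); have := one_subC_lt_D D_gt0; nia.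
have n0_gt0 : (0 < n0)%N by rewrite -ltz_nat n0E; have := one_subC_lt_D D_gt0; nia.
have [[Z [R' [sizeZ ZR' maxE]]] _] := max_nb n0_gt0.
have R'E : R' = R.
  move: maxE; have -> : n0%:Z - C = R%:Z * D%:Z by lia.
  by rewrite mulzK ?max_r ?lt0r_neq0 ?ltz_nat //; lia.
have := minl Z; rewrite sizeZ -R'E => /(_ n0_gt0 ZR').
by move: RD_le; lia.
Qed.

Lemma loss_formula (X : seq int) (R : nat) (M : int) (l : nat) :
  (0 < size X)%N -> nb_sigma sigma X R -> is_max_nb sigma (size X) M ->
  is_min_len sigma R l ->
  let n := size X in
  n%:Z - l%:Z =
    (M - R%:Z) * D%:Z
    + (1 - sgz (R%:Z)) * (Num.min n%:Z C - 1)
    + ((Num.max 0 (n%:Z - C)) %% D%:Z)%Z.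
Proof.
move=> X_gt0 XR maxM minl n; rewrite {}/n.
rewrite (is_max_nb_uniq maxM (max_nb X_gt0)).
have := max0_divz_mulz_addz_modz ((size X)%:Z - C) D.
have [R0|R_gt0] := posnP R.
  by move: minl; rewrite R0 => /is_min_len0 ->; rewrite sgz0; nia.
rewrite (is_min_len_gt0 R_gt0 minl) gtr0_sgz ?ltz_nat //.
have := nb_sigma_mulD_le X_gt0 XR.
have := nb_sigma_gt0_D_gt0 X_gt0 XR R_gt0.
nia.
Qed.

End MaximumFormula.

Theorem theorem5 (sigma : regex) (D : nat) (C : int) :
  homogeneous sigma D ->
  (forall n : nat, (0 < n)%N ->
     is_max_nb sigma n (Num.max 0 ((n%:Z - C) %/ D%:Z)%Z)) ->
  (* gap-to-loss condition *)
  (exists h : int -> int -> nat -> int,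
     forall (X : seq int) (R : nat) (M : int) (l : nat),
       (0 < size X)%N -> nb_sigma sigma X R -> is_max_nb sigma (size X) M ->
       is_min_len sigma R l ->
       (size X)%:Z - l%:Z = h (M - R%:Z) (sgz (R%:Z)) (size X)) /\
  (* explicit formula *)
  (forall (X : seq int) (R : nat) (M : int) (l : nat),
     (0 < size X)%N -> nb_sigma sigma X R -> is_max_nb sigma (size X) M ->
     is_min_len sigma R l ->
     let n := size X in
     n%:Z - l%:Z =
       (M - R%:Z) * D%:Z
       + (1 - sgz (R%:Z)) * (Num.min n%:Z C - 1)
       + ((Num.max 0 (n%:Z - C)) %% D%:Z)%Z).
Proof.
(* Homogeneity is what the paper uses to derive the maximum formula; with that
   formula assumed, the loss depends on nothing else. *)
move=> _ max_nb; split; last exact: loss_formula.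
exists (fun gap sgn n => gap * D%:Z + (1 - sgn) * (Num.min n%:Z C - 1)
                         + ((Num.max 0 (n%:Z - C)) %% D%:Z)%Z).
exact: loss_formula.
Qed.
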